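(* Let $P$, $\mathcal{R}$ and the algorithm be as below, with output graph $G$. Let $q,q'\in P$ with $x(q)<x(q')$ such that the edge $qq'$ is Delaunay. If $qq'\notin E(G)$, then either (i) $h(qq')$ discretely pierces a rectangle of $\mathcal{R}$ or crosses an edge existing when $q'$ is processed, or (ii) $v(qq')$ discretely pierces a rectangle of $\mathcal{R}$. In particular, $v(qq')$ does not cross an existing edge.
   Context: $P$ is a finite point set and $\mathcal{R}$ a finite family of non-piercing axis-parallel rectangles (for any $R_1,R_2$, $R_1\setminus R_2$ connected), in general position. For $x(q)<x(q')$ the edge $qq'$ is the L-shaped curve consisting of the vertical segment $v(qq')$ from $q'$ to $(x(q'),y(q))$ and the horizontal segment $h(qq')$ from $(x(q'),y(q))$ to $q$. It is Delaunay if the interior of the rectangle with diagonal corners $q,q'$ contains no point of $P$. A set $S$ discretely pierces a rectangle $R$ if $R\setminus S$ has two components, each containing a point of $P$. An edge is valid if it discretely pierces no rectangle of $\mathcal{R}$ and crosses no edge already present. The algorithm sorts $P$ by $x$-coordinate as $p_1,\dots,p_n$ and for $i=2,\dots,n$ (processing $p_i$) adds all valid Delaunay edges $p_ip_j$ with $j<i$. *)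

From HB Require Import structures.
From mathcomp Require Import all_boot all_order all_algebra.
From mathcomp Require Import all_classical all_reals all_analysis.
Set Implicit Arguments. Unset Strict Implicit. Unset Printing Implicit Defensive.
Import Order.TTheory GRing.Theory Num.Theory numFieldNormedType.Exports.
Local Open Scope classical_set_scope.
Local Open Scope ring_scope.

Section Defs.
Variable R : realType.

Local Notation pt := (R * R)%type.

(* closed axis-parallel rectangle [rxl, rxr] x [ryb, ryt] *)
Definition rect := ((R * R) * (R * R))%type.
Definition rxl (r : rect) : R := r.1.1.
Definition rxr (r : rect) : R := r.1.2.
Definition ryb (r : rect) : R := r.2.1.
Definition ryt (r : rect) : R := r.2.2.

Definition rect_wf (r : rect) : Prop := rxl r < rxr r /\ ryb r < ryt r.

Definition rect_set (r : rect) : set pt :=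
  [set p | rxl r <= p.1 <= rxr r /\ ryb r <= p.2 <= ryt r].

Definition non_piercing (Rs : seq rect) : Prop :=
  forall r1 r2, r1 \in Rs -> r2 \in Rs ->
    connected (rect_set r1 `\` rect_set r2).

Definition general_position (P : seq pt) (Rs : seq rect) : Prop :=
  uniq (map fst P ++ flatten [seq [:: rxl r; rxr r] | r <- Rs]) /\
  uniq (map snd P ++ flatten [seq [:: ryb r; ryt r] | r <- Rs]).

(* S discretely pierces r: r \ S has exactly two connected components,
   each containing a point of P *)
Definition dpierces (P : seq pt) (S : set pt) (r : rect) : Prop :=
  let D := rect_set r `\` S in
  exists a b : pt, [/\ a \in P, b \in P, D a /\ D b,
    ~ connected_component D a b &
    D `<=` connected_component D a `|` connected_component D b].

(* for x(q) < x(q'): v(qq') is the vertical segment from q' to (x q', y q),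
   h(qq') the horizontal segment from (x q', y q) to q *)
Definition vseg (q q' : pt) : set pt :=
  [set p | p.1 = q'.1 /\ (q.2 <= p.2 <= q'.2 \/ q'.2 <= p.2 <= q.2)].
Definition hseg (q q' : pt) : set pt :=
  [set p | p.2 = q.2 /\ q.1 <= p.1 <= q'.1].
Definition edge_set (q q' : pt) : set pt := vseg q q' `|` hseg q q'.

Definition open_vseg (q q' : pt) : set pt :=
  [set p | p.1 = q'.1 /\ (q.2 < p.2 < q'.2 \/ q'.2 < p.2 < q.2)].
Definition open_hseg (q q' : pt) : set pt :=
  [set p | p.2 = q.2 /\ q.1 < p.1 < q'.1].

(* crossings: a horizontal and a vertical piece meeting at a point interior
   to both (in general position this is the only way two edges can cross) *)
Definition h_crosses (q q' : pt) (f : pt * pt) : Prop :=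
  open_hseg q q' `&` open_vseg f.1 f.2 !=set0.
Definition v_crosses (q q' : pt) (f : pt * pt) : Prop :=
  open_vseg q q' `&` open_hseg f.1 f.2 !=set0.
Definition edges_cross (e f : pt * pt) : Prop :=
  h_crosses e.1 e.2 f \/ v_crosses e.1 e.2 f.

Definition delaunay (P : seq pt) (q q' : pt) : Prop :=
  forall p, p \in P ->
    ~ ((q.1 < p.1 < q'.1 \/ q'.1 < p.1 < q.1) /\
       (q.2 < p.2 < q'.2 \/ q'.2 < p.2 < q.2)).

Definition valid (P : seq pt) (Rs : seq rect) (E : seq (pt * pt))
    (q q' : pt) : Prop :=
  (forall r, r \in Rs -> ~ dpierces P (edge_set q q') r) /\
  (forall f, f \in E -> ~ edges_cross (q, q') f).

Definition new_edges (P : seq pt) (Rs : seq rect) (done : seq pt)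
    (E : seq (pt * pt)) (p : pt) : seq (pt * pt) :=
  [seq (pj, p) | pj <- done & `[< delaunay P pj p /\ valid P Rs E pj p >]].

Fixpoint alg_aux (P : seq pt) (Rs : seq rect) (todo done : seq pt)
    (E : seq (pt * pt)) : seq (pt * pt) :=
  match todo with
  | [::] => E
  | p :: todo' => alg_aux P Rs todo' (rcons done p) (E ++ new_edges P Rs done E p)
  end.

Definition run (P : seq pt) (Rs : seq rect) (pts : seq pt) : seq (pt * pt) :=
  alg_aux P Rs pts [::] [::].

(* edge set of the output graph G, P being sorted by x-coordinate *)
Definition output (P : seq pt) (Rs : seq rect) := run P Rs P.

Definition edges_before (P : seq pt) (Rs : seq rect) (q' : pt) :=
  run P Rs (take (index q' P) P).

End Defs.

From HB Require Import structures.
From mathcomp Require Import all_boot all_order all_algebra.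
From mathcomp Require Import all_classical all_reals all_analysis.
From mathcomp Require Import lra.
Set Implicit Arguments. Unset Strict Implicit. Unset Printing Implicit Defensive.
Import Order.TTheory GRing.Theory Num.Theory numFieldNormedType.Exports.
Local Open Scope classical_set_scope.
Local Open Scope ring_scope.

(* Suppose the Delaunay edge qq' was rejected when q' was processed.  Then it
   was invalid against the edges present at that time.  Every such edge ends
   at a point processed earlier, hence strictly left of x(q'), so it can only
   cross the horizontal part h(qq').  If the L-shaped edge discretely pierces
   a rectangle r, general position keeps q' off the vertical sides of r and q
   off its horizontal sides.  When the corner (x(q'), y(q)) lies outside r in
   x (resp. in y), r meets only h(qq') (resp. v(qq')), which therefore pierces
   r by itself.  When the corner lies inside r, the horizontal side of r on
   the far side of q from q', together with the right side of r, is a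
   connected set avoiding the edge, and every point of P in r off the edge
   reaches it by a vertical or a horizontal segment, except for the points of
   the closed box spanned by q and q', which the Delaunay property places on
   the edge itself.  So the edge does not pierce r after all. *)

Section Segments.
Variable R : realType.
Local Notation pt := (R * R)%type.

Lemma connected_horizontal_image (I : set R) (c : R) :
  is_interval I -> connected ((fun t => (t, c) : pt) @` I).
Proof.
move=> /connected_intervalP cI; apply: connected_continuous_connected cI _.
apply/continuous_subspaceT => t.
exact: (cvg_pair (G := nbhs t) (H := nbhs c) cvg_id (cvg_cst c)).
Qed.

Lemma connected_vertical_image (I : set R) (c : R) :
  is_interval I -> connected ((fun t => (c, t) : pt) @` I).
Proof.
move=> /connected_intervalP cI; apply: connected_continuous_connected cI _.
apply/continuous_subspaceT => t.
exact: (cvg_pair (G := nbhs c) (H := nbhs t) (cvg_cst c) cvg_id).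
Qed.

Lemma connected_hseg (u v : pt) : connected (hseg u v).
Proof.
have -> : hseg u v = (fun t => (t, u.2) : pt) @` [set t | u.1 <= t <= v.1].
  by apply/seteqP; split=> [[x y] [/= -> ?]|_ [t ? <-]] //; exists x.
apply: connected_horizontal_image => x y /andP[ux _] /andP[_ yv] z /andP[xz zy].
by rewrite /= (le_trans ux xz) (le_trans zy yv).
Qed.

Lemma connected_vseg (u v : pt) : connected (vseg u v).
Proof.
have -> : vseg u v =
    (fun t => (v.1, t) : pt) @` [set t | u.2 <= t <= v.2 \/ v.2 <= t <= u.2].
  by apply/seteqP; split=> [[x y] [/= -> ?]|_ [t ? <-]] //; exists y.
apply: connected_vertical_image => x y hx hy z /andP[xz zy].
have [uv|vu] := lerP u.2 v.2; [left|right]; apply/andP; split;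
  case: hx => /andP[? ?]; case: hy => /andP[? ?]; lra.
Qed.

End Segments.

Ltac seg_lra :=
  unfold setD, setU, setI, edge_set, vseg, hseg, rect_set in *;
  repeat match goal with
  | |- forall _, _ => intro
  | |- ~ _ => intro
  | H : _ /\ _ |- _ => destruct H
  | H : _ \/ _ |- _ => destruct H
  | H : is_true (_ && _) |- _ => case/andP: H
  | |- _ /\ _ => split
  | |- is_true (_ && _) => apply/andP; split
  end; simpl in *; try lra.

Section Piercing.
Variable R : realType.
Local Notation pt := (R * R)%type.
Variable P : seq pt.

Lemma dpierces_eq (S1 S2 : set pt) (r : rect R) :
  rect_set r `\` S1 = rect_set r `\` S2 -> dpierces P S1 r -> dpierces P S2 r.
Proof. by rewrite /dpierces => ->. Qed.

Lemma hub_not_dpierces (S H : set pt) (r : rect R) :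
  connected H -> H `<=` rect_set r `\` S ->
  (forall a, a \in P -> (rect_set r `\` S) a ->
     exists C : set pt, [/\ C a, connected C, C `<=` rect_set r `\` S & C `&` H !=set0]) ->
  ~ dpierces P S r.
Proof.
move=> cH HD reach [a [b [aP bP [Da Db] not_ab _]]].
have [Ca [Caa cCa CaD [x [Cax Hx]]]] := reach a aP Da.
have [Cb [Cbb cCb CbD [y [Cby Hy]]]] := reach b bP Db.
apply: not_ab; exists ((Ca `|` H) `|` Cb); last by right.
split; first by left; left.
  by move=> z [[Cz|Hz]|Cz]; [apply: CaD|apply: HD|apply: CbD].
apply: connectedU => //; first by exists y; split; [right|].
by apply: connectedU => //; exists x.
Qed.

Lemma side_hub_not_dpierces (S : set pt) (r : rect R) (y0 : R) :
  rxl r <= rxr r -> ryb r <= y0 <= ryt r ->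
  hseg (rxl r, y0) (rxr r, 0) `|` vseg (0, ryb r) (rxr r, ryt r) `<=` rect_set r `\` S ->
  (forall a, a \in P -> (rect_set r `\` S) a ->
     vseg (0, y0) a `<=` rect_set r `\` S \/ hseg a (rxr r, 0) `<=` rect_set r `\` S) ->
  ~ dpierces P S r.
Proof.
move=> lr ly0 HD reach; apply: hub_not_dpierces HD _.
  apply: connectedU; [exists (rxr r, y0); seg_lra|exact: connected_hseg|exact: connected_vseg].
move=> a aP Da.
case: (reach a aP Da) => [vD|hD]; [exists (vseg (0, y0) a)|exists (hseg a (rxr r, 0))].
  by split=> //; [seg_lra|exact: connected_vseg|exists (a.1, y0); seg_lra].
by split=> //; [seg_lra|exact: connected_hseg|exists (rxr r, a.2); seg_lra].
Qed.

End Piercing.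

Section Corner.
Variable R : realType.
Local Notation pt := (R * R)%type.
Variable P : seq pt.
Hypothesis inj_fst : {in P &, injective fst}.
Hypothesis inj_snd : {in P &, injective snd}.

Lemma delaunay_closed_box (q q' a : pt) :
  q \in P -> q' \in P -> a \in P -> delaunay P q q' ->
  q.1 <= a.1 <= q'.1 -> q.2 <= a.2 <= q'.2 \/ q'.2 <= a.2 <= q.2 ->
  edge_set q q' a.
Proof.
move=> qP q'P aP hD /andP[qa aq'] a2.
have [/inj_fst ->//|ne_aq] := eqVneq a.1 q.1.
  by right; split=> //=; rewrite lexx (le_trans qa aq').
have [eq1|ne1] := eqVneq a.1 q'.1; first by left.
have [eq2|ne2] := eqVneq a.2 q.2; first by right; split=> //; apply/andP.
have [/inj_snd ->//|ne_aq'] := eqVneq a.2 q'.2.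
  by left; split=> //=; rewrite lexx andbT /=; apply/orP; exact: le_total.
case: (hD a aP); split; first by left; rewrite !lt_neqAle qa aq' ne1 (eq_sym q.1) ne_aq.
by case: a2 => /andP[l1 l2]; [left|right];
  rewrite !lt_neqAle l1 l2 ?ne_aq' ?ne2 ?(eq_sym q.2) ?(eq_sym q'.2) ?ne_aq' ?ne2.
Qed.

Lemma corner_not_dpierces (r : rect R) (q q' : pt) :
  q \in P -> q' \in P -> q.1 < q'.1 -> delaunay P q q' ->
  rxl r < q'.1 < rxr r -> ryb r < q.2 < ryt r ->
  ~ dpierces P (edge_set q q') r.
Proof.
move=> qP q'P lt_qq' hD /andP[? ?] /andP[? ?].
have boxP a : a \in P -> (rect_set r `\` edge_set q q') a ->
    q.1 <= a.1 <= q'.1 -> q.2 <= a.2 <= q'.2 \/ q'.2 <= a.2 <= q.2 -> False.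
  by move=> aP [_ Da] ax ay; apply: Da; exact: delaunay_closed_box.
case: (ltgtP q.2 q'.2) => [up|down|/inj_snd eq_qq'];
  last by move: lt_qq'; rewrite eq_qq' ?ltxx.
- apply: (side_hub_not_dpierces (y0 := ryb r)); [lra|lra|by case=> x y; seg_lra|].
  move=> a aP Da.
  have [lo|] := boolP ((a.1 < q.1) || (a.2 < q.2)); first by left; case=> x y; seg_lra.
  have [hi|] := boolP ((q'.1 < a.1) || (q'.2 < a.2)); first by right; case=> x y; seg_lra.
  rewrite !negb_or -!leNgt => /andP[? ?] /andP[? ?].
  by case: (boxP a aP Da); [|left]; apply/andP; split.
- apply: (side_hub_not_dpierces (y0 := ryt r)); [lra|lra|by case=> x y; seg_lra|].
  move=> a aP Da.
  have [lo|] := boolP ((a.1 < q.1) || (q.2 < a.2)); first by left; case=> x y; seg_lra.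
  have [hi|] := boolP ((q'.1 < a.1) || (a.2 < q'.2)); first by right; case=> x y; seg_lra.
  rewrite !negb_or -!leNgt => /andP[? ?] /andP[? ?].
  by case: (boxP a aP Da); [|right]; apply/andP; split.
Qed.

Lemma dpierces_edge_split (r : rect R) (q q' : pt) :
  q \in P -> q' \in P -> q.1 < q'.1 -> delaunay P q q' ->
  q'.1 \notin [:: rxl r; rxr r] -> q.2 \notin [:: ryb r; ryt r] ->
  dpierces P (edge_set q q') r ->
  dpierces P (hseg q q') r \/ dpierces P (vseg q q') r.
Proof.
rewrite !inE !negb_or => qP q'P lt_qq' hD /andP[xl xr] /andP[yb yt] hp.
have [x_out|] := boolP ((q'.1 < rxl r) || (rxr r < q'.1)).
  left; apply: dpierces_eq hp; rewrite /edge_set setDUr setDidl ?setIDA ?setIid //.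
  by rewrite -subset0 => -[x y]; seg_lra.
have [y_out|] := boolP ((q.2 < ryb r) || (ryt r < q.2)).
  right; apply: dpierces_eq hp; rewrite /edge_set setDUr (@setDidl _ _ (hseg q q')).
    by rewrite setIC setIDA setIid.
  by rewrite -subset0 => -[x y]; seg_lra.
rewrite !negb_or -!leNgt => /andP[bq tq] /andP[lq rq]; exfalso.
apply: (corner_not_dpierces qP q'P lt_qq' hD _ _ hp).
  by rewrite lt_def xl lq lt_neqAle xr rq.
by rewrite lt_def yb bq lt_neqAle yt tq.
Qed.

End Corner.

Lemma uniq_map_inj_in (T U : eqType) (f : T -> U) (s : seq T) :
  uniq (map f s) -> {in s &, injective f}.
Proof.
elim: s => //= x s IH /andP[fx_notin uniq_fs] a b; rewrite !inE.
case/predU1P=> [->|aS] /predU1P[->|bS] // fab.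
- by rewrite fab map_f in fx_notin.
- by rewrite -fab map_f in fx_notin.
- exact: IH.
Qed.

Lemma uniq_cat_flatten_notin (T U : eqType) (s : seq T) (f : U -> seq T) (us : seq U) x u :
  uniq (s ++ flatten (map f us)) -> x \in s -> u \in us -> x \notin f u.
Proof.
rewrite cat_uniq => /and3P[_ /hasPn notin_s _] xs uus.
by apply: contraL xs => xfu; apply: notin_s; apply/flattenP; exists (f u); rewrite ?map_f.
Qed.

Section Algorithm.
Variable R : realType.
Local Notation pt := (R * R)%type.
Variables (P : seq pt) (Rs : seq (rect R)).

Lemma alg_aux_cat (xs ys done : seq pt) (E : seq (pt * pt)) :
  alg_aux P Rs (xs ++ ys) done E =
  alg_aux P Rs ys (done ++ xs) (alg_aux P Rs xs done E).
Proof.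
elim: xs done E => [|x xs IH] done E /=; first by rewrite cats0.
by rewrite IH cat_rcons.
Qed.

Lemma sub_alg_aux (todo done : seq pt) (E : seq (pt * pt)) :
  {subset E <= alg_aux P Rs todo done E}.
Proof.
elim: todo done E => [|x xs IH] done E //= f fE.
by apply: IH; rewrite mem_cat fE.
Qed.

Lemma mem_alg_aux (todo done : seq pt) (E : seq (pt * pt)) f :
  f \in alg_aux P Rs todo done E -> f \in E \/ f.2 \in todo.
Proof.
elim: todo done E => [|x xs IH] done E /=; first by left.
case/IH=> [|f2]; last by right; rewrite inE f2 orbT.
rewrite mem_cat => /orP[fE|/mapP[pj _ ->]]; first by left.
by right; rewrite inE eqxx.
Qed.

Lemma valid_delaunay_mem_output (q q' : pt) :
  q \in P -> q' \in P -> (index q P < index q' P)%N -> delaunay P q q' ->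
  valid P Rs (edges_before P Rs q') q q' -> (q, q') \in output P Rs.
Proof.
move=> qP q'P lt_qq' hD hV; rewrite /output /run.
rewrite -{2}(cat_take_drop (index q' P) P) (drop_nth q') ?index_mem // nth_index //.
rewrite alg_aux_cat /=; apply: sub_alg_aux; rewrite mem_cat; apply/orP; right.
apply/mapP; exists q => //; rewrite mem_filter in_take // lt_qq' andbT.
exact/asboolP.
Qed.

Hypothesis sorted_P : sorted (fun a b : pt => a.1 < b.1) P.

Let lt_fst_trans : transitive (fun a b : pt => a.1 < b.1).
Proof. by move=> b a c; exact: lt_trans. Qed.

Lemma lt_fst_index (x y : pt) : x \in P -> y \in P -> x.1 < y.1 -> (index x P < index y P)%N.
Proof.
move=> xP yP lt_xy; rewrite ltnNge leq_eqVlt negb_or; apply/andP; split.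
  by apply: contraTneq lt_xy => /(congr1 (nth x P)); rewrite !nth_index // => ->; rewrite ltxx.
apply: contraTN lt_xy => /(sorted_ltn_index lt_fst_trans sorted_P _ _ yP xP).
by move/ltW; rewrite leNgt.
Qed.

Lemma edges_before_lt (q' : pt) (f : pt * pt) :
  q' \in P -> f \in edges_before P Rs q' -> f.2.1 < q'.1.
Proof.
move=> q'P /mem_alg_aux[//|f2]; have f2P := mem_take f2; rewrite in_take // in f2.
exact: (sorted_ltn_index lt_fst_trans sorted_P _ _ f2P q'P f2).
Qed.

Lemma edges_before_not_v_crosses (q q' : pt) f :
  q' \in P -> f \in edges_before P Rs q' -> ~ v_crosses q q' f.
Proof.
move=> q'P /(edges_before_lt q'P) lt_f2 [p [[p1 _] [_ /andP[_ lt_pf]]]].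
by move: (lt_trans lt_pf lt_f2); rewrite p1 ltxx.
Qed.

End Algorithm.

Theorem proposition6 (R : realType) (P : seq (R * R)%type) (Rs : seq (rect R)) :
  sorted (fun a b : (R * R)%type => a.1 < b.1) P ->
  general_position P Rs ->
  (forall r, r \in Rs -> rect_wf r) ->
  non_piercing Rs ->
  forall q q' : (R * R)%type, q \in P -> q' \in P -> q.1 < q'.1 ->
  delaunay P q q' ->
  (q, q') \notin output P Rs ->
  (((exists r, r \in Rs /\ dpierces P (hseg q q') r) \/
    (exists f, f \in edges_before P Rs q' /\ h_crosses q q' f)) \/
   (exists r, r \in Rs /\ dpierces P (vseg q q') r)) /\
  ~ (exists f, f \in edges_before P Rs q' /\ v_crosses q q' f).
Proof.
move=> sP [gp_x gp_y] _ _ q q' qP q'P lt_qq' hD not_out.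
have inj_fst : {in P &, injective fst}.
  by apply: uniq_map_inj_in; move: gp_x; rewrite cat_uniq => /andP[].
have inj_snd : {in P &, injective snd}.
  by apply: uniq_map_inj_in; move: gp_y; rewrite cat_uniq => /andP[].
have no_vcross f : f \in edges_before P Rs q' -> ~ v_crosses q q' f.
  exact: edges_before_not_v_crosses.
split; last by case=> f [/no_vcross].
have not_valid : ~ valid P Rs (edges_before P Rs q') q q'.
  move=> hV; move/negP: not_out; apply.
  by apply: valid_delaunay_mem_output => //; exact: lt_fst_index.
apply: contrapT => no_reason; apply: not_valid; split.
- move=> r rRs /(dpierces_edge_split inj_fst inj_snd qP q'P lt_qq' hD) [].
  + by apply: (uniq_cat_flatten_notin gp_x _ rRs); exact: map_f.
  + by apply: (uniq_cat_flatten_notin gp_y _ rRs); exact: map_f.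
  + by move=> h_pierces; apply: no_reason; left; left; exists r.
  + by move=> v_pierces; apply: no_reason; right; exists r.
- move=> f fE [h_cross|/(no_vcross f fE)//].
  by apply: no_reason; left; right; exists f.
Qed.
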